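(* Every topological pseudovector (Abelian) group which is metrizable as a topological space admits a subnorm inducing its topology.
   Context: A pseudovector group is a triple $(G,+,* )$ where $(G,+)$ is an Abelian group and $*\colon[0,\infty)\times G\to G$ is an action with $0*x=0$, $1*x=x$, $(st)*x=s*(t*x)$ for all $s,t\geqslant0$, $x\in G$, and $x\mapsto t*x$ a group homomorphism for each $t\geqslant0$. A topological pseudovector group is such a $G$ with a topology making $(G,+)$ a topological group and $*$ continuous. A value on $G$ is $p\colon G\to[0,\infty)$ with $p(x)=0\iff x=0$, $p(-x)=p(x)$, $p(x+y)\leqslant p(x)+p(y)$; it induces the metric $p(x-y)$. A subnorm is a value $\|\cdot\|$ with $\|t*x\|\leqslant\max(t,1)\|x\|$ for all $t\geqslant0$, $x\in G$. *)

From HB Require Import structures.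
From mathcomp Require Import all_boot all_order all_algebra.
From mathcomp Require Import all_classical all_reals all_analysis.
Set Implicit Arguments. Unset Strict Implicit. Unset Printing Implicit Defensive.
Import Order.TTheory GRing.Theory Num.Theory.
Import numFieldNormedType.Exports.
Local Open Scope classical_set_scope.
Local Open Scope ring_scope.

(* The action  * : [0,oo) x G -> G  is represented by a function
   act : R -> G -> G of which only the values at t >= 0 matter. *)
Definition pseudovector_action (R : realType) (G : zmodType)
    (act : R -> G -> G) : Prop :=
  [/\ forall x : G, act 0 x = 0,
      forall x : G, act 1 x = x,
      forall (s t : R) (x : G), 0 <= s -> 0 <= t -> act (s * t) x = act s (act t x)
    & forall t : R, 0 <= t -> forall x y : G, act t (x + y) = act t x + act t y].

Definition topological_pseudovector_action (R : realType)
    (G : topologicalZmodType) (act : R -> G -> G) : Prop :=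
  pseudovector_action act /\
  {within [set p : R * G | 0 <= p.1], continuous (fun p : R * G => act p.1 p.2)}.

Definition metric_open (R : realType) (T : Type) (d : T -> T -> R) (A : set T) :=
  forall x, A x -> exists e : R, 0 < e /\ [set y | d x y < e] `<=` A.

Definition is_metric (R : realType) (T : Type) (d : T -> T -> R) : Prop :=
  [/\ forall x y, d x y = 0 <-> x = y,
      forall x y, d x y = d y x
    & forall x y z, d x z <= d x y + d y z].

Definition induces_topology (R : realType) (T : topologicalType)
    (d : T -> T -> R) : Prop :=
  forall A : set T, open A <-> metric_open d A.

Definition metrizable (R : realType) (T : topologicalType) : Prop :=
  exists d : T -> T -> R, is_metric d /\ induces_topology d.

Definition is_value (R : realType) (G : zmodType) (p : G -> R) : Prop :=
  [/\ forall x, 0 <= p x,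
      forall x, p x = 0 <-> x = 0,
      forall x, p (- x) = p x
    & forall x y, p (x + y) <= p x + p y].

Definition is_subnorm (R : realType) (G : zmodType) (act : R -> G -> G)
    (p : G -> R) : Prop :=
  is_value p /\ forall (t : R) (x : G), 0 <= t -> p (act t x) <= Num.max t 1 * p x.

Definition value_metric (R : realType) (G : zmodType) (p : G -> R) : G -> G -> R :=
  fun x y => p (x - y).

(* A metrizable group has a countable base U_n of symmetric neighbourhoods of 0
   with U_(n+1) + U_(n+1) + U_(n+1) <= U_n.  The Birkhoff-Kakutani construction
   q(x) = inf { sum 2^-n_i : x = sum x_i, x_i in U_(n_i) } is then a value
   bounded by 1 whose balls form a neighbourhood base of 0.  Rescaling along the
   action, p(x) = sup_(t >= 0) q(t * x) / max(t, 1), gives a subnorm with q <= p.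
   Its balls are still neighbourhoods of 0: for t >= 2/e the bound q <= 1 gives
   q(t * x) / t < e/2, while for t in [0, 2/e] joint continuity of the action and
   compactness of the segment make q(t * x) < e/2 uniformly for x near 0. *)

From HB Require Import structures.
From mathcomp Require Import all_boot all_order all_algebra.
From mathcomp Require Import all_classical all_reals all_analysis.
From mathcomp Require Import ring lra zify.
Import Order.TTheory GRing.Theory Num.Theory.
Import numFieldNormedType.Exports.
Local Open Scope classical_set_scope.
Local Open Scope ring_scope.

Section TopologicalZmodule.
Context {G : topologicalZmodType}.

Lemma cvg_subl (x y : G) : (fun z => x - z) @ y --> x - y.
Proof.
apply: (@continuous_comp _ _ _ (fun z => (x, z)) (fun p : G * G => p.1 - p.2)).
  by apply: cvg_pair => /=; [exact: cvg_cst | exact: cvg_id].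
exact: sub_continuous.
Qed.

Lemma nbhs_subE (x : G) (A : set G) : nbhs x A <-> nbhs 0 [set y | A (x - y)].
Proof.
split => [xA | A0].
  by have := cvg_subl x 0; rewrite subr0 => /(_ _ xA).
have := cvg_subl x x; rewrite subrr => /(_ _ A0) xA.
by apply: (@filterS _ (nbhs x) _ _ _ _ xA) => z /=; rewrite opprB addrC subrK.
Qed.

Lemma nbhs0_add_split (V : set G) : nbhs 0 V ->
  exists2 W : set G, nbhs 0 W & forall a b, W a -> W b -> V (a + b).
Proof.
move=> V0; have := @add_continuous G (0, 0) V; rewrite /= addr0 => /(_ V0).
move=> [[W1 W2] /= [W10 W20] W12V]; exists (W1 `&` W2); first exact: filterI.
by move=> a b [W1a _] [_ W2b]; exact: (W12V (a, b)).
Qed.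

Lemma nbhs0_sym_add3 (V : set G) : nbhs 0 V ->
  exists W : set G, [/\ nbhs 0 W, forall x, W x -> W (- x)
    & forall a b c, W a -> W b -> W c -> V (a + b + c)].
Proof.
move=> /nbhs0_add_split [W1 W10 W1V] /=.
have [W2 W20 W2W1] := nbhs0_add_split _ W10.
have W2N0 : nbhs 0 [set x | W2 (- x)].
  by have := @opp_continuous G 0 W2; rewrite oppr0; apply.
exists (W2 `&` [set x | W2 (- x)]); split.
- exact: filterI.
- by move=> x [W2x W2Nx]; split; rewrite //= opprK.
- move=> a b c [W2a _] [W2b _] [W2c _]; apply: W1V; first exact: W2W1.
  by rewrite -[c]addr0; apply: W2W1 => //; exact: nbhs_singleton.
Qed.

Definition nbhs0_shrink (V : set G) : set G :=
  if pselect (nbhs 0 V) is left V0 then projT1 (cid (nbhs0_sym_add3 _ V0)) else V.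

Lemma nbhs0_shrinkP V : nbhs 0 V ->
  [/\ nbhs 0 (nbhs0_shrink V), forall x, nbhs0_shrink V x -> nbhs0_shrink V (- x)
    & forall a b c, nbhs0_shrink V a -> nbhs0_shrink V b -> nbhs0_shrink V c ->
        V (a + b + c)].
Proof. by move=> V0; rewrite /nbhs0_shrink; case: pselect => // V0'; case: cid. Qed.

End TopologicalZmodule.

Lemma metric_nbhsP {R : realType} {T : topologicalType} {d : T -> T -> R} :
  is_metric d -> induces_topology d -> forall (x : T) (A : set T),
  nbhs x A <-> exists e : R, 0 < e /\ [set y | d x y < e] `<=` A.
Proof.
move=> [d0 _ dT] dI x A; split.
  rewrite nbhsE => -[B [oB Bx] BA].
  have [e [e0 eB]] := proj1 (dI B) oB x Bx.
  by exists e; split => // y /eB /BA.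
move=> [e [e0 eA]].
have ball_open : open [set y | d x y < e].
  apply/dI => y /= dxy; exists (e - d x y); split; first by rewrite subr_gt0.
  by move=> z /= dyz; apply: le_lt_trans (dT x y z) _; rewrite -ltrBrDl.
move: ball_open; rewrite openE => /(_ x); rewrite /= (proj2 (d0 x x)) // => /(_ e0).
exact: filterS.
Qed.

Definition zero_ball_base {R : realType} {G : topologicalZmodType} (p : G -> R) :=
  (forall V : set G, nbhs 0 V -> exists2 e : R, 0 < e & [set y | p y < e] `<=` V) /\
  (forall e : R, 0 < e -> nbhs 0 [set y | p y < e]).

Lemma value_metric_induces {R : realType} {G : topologicalZmodType} {p : G -> R} :
  zero_ball_base p -> induces_topology (value_metric p).
Proof.
move=> [pV pe] A; rewrite openE; split => [oA x Ax | mA x Ax].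
  have [e e0 eA] := pV _ (proj1 (nbhs_subE x A) (oA x Ax)).
  by exists e; split => // z /eA /=; rewrite opprB addrC subrK.
apply/nbhs_subE; have [e [e0 eA]] := mA x Ax.
by apply: filterS (pe e e0) => y py; apply: eA; rewrite /value_metric /= opprB addrC subrK.
Qed.

Definition halfpow {R : realType} (n : nat) : R := 2^-1 ^+ n.

Section HalfPow.
Context {R : realType}.

Lemma halfpow_gt0 n : 0 < halfpow n :> R.
Proof. by rewrite exprn_gt0 // invr_gt0. Qed.

Lemma halfpowS n : halfpow n.+1 = halfpow n / 2 :> R.
Proof. exact: exprSr. Qed.

Lemma halfpow_le m n : (halfpow m <= halfpow n :> R) = (n <= m)%N.
Proof. by rewrite /halfpow ler_iXn2l //; lra. Qed.

Lemma halfpow_le_inv n : halfpow n <= n.+1%:R^-1 :> R.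
Proof.
rewrite /halfpow exprVn lef_pV2 ?posrE ?exprn_gt0 ?ltr0n //.
by rewrite -natrX ler_nat; exact: ltn_expl.
Qed.

End HalfPow.

Section BirkhoffKakutani.
Context {R : realType} {G : zmodType}.
Variable U : nat -> set G.
Hypothesis U0_full : forall x, U 0%N x.
Hypothesis U_0 : forall n, U n 0.
Hypothesis U_opp : forall n x, U n x -> U n (- x).
Hypothesis U_add3 : forall n a b c, U n.+1 a -> U n.+1 b -> U n.+1 c -> U n (a + b + c).

Definition chain_in (s : seq (nat * G)) := forall a, a \in s -> U a.1 a.2.
Definition chain_weight (s : seq (nat * G)) : R := \sum_(a <- s) halfpow a.1.
Definition chain_sum (s : seq (nat * G)) : G := \sum_(a <- s) a.2.

Lemma U_decr m n x : (m <= n)%N -> U n x -> U m x.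
Proof.
move=> /subnK <-; elim: (n - m)%N => // k IH Ux; apply: IH.
by rewrite -[x]addr0 -[x + 0]addr0; apply: U_add3.
Qed.

Lemma chain_in_cat s t : chain_in (s ++ t) <-> chain_in s /\ chain_in t.
Proof.
split=> [st | [ss tt] a]; last by rewrite mem_cat => /orP [/ss | /tt].
by split=> a a_in; apply: st; rewrite mem_cat a_in ?orbT.
Qed.

Lemma chain_weight_cons a s : chain_weight (a :: s) = halfpow a.1 + chain_weight s.
Proof. exact: big_cons. Qed.

Lemma chain_weight_cat s t : chain_weight (s ++ t) = chain_weight s + chain_weight t.
Proof. exact: big_cat. Qed.

Lemma chain_sum_cat s t : chain_sum (s ++ t) = chain_sum s + chain_sum t.
Proof. exact: big_cat. Qed.

Lemma chain_weight_ge0 s : 0 <= chain_weight s.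
Proof. by apply: sumr_ge0 => a _; exact/ltW/halfpow_gt0. Qed.

Lemma chain_weight_le0 s : chain_weight s <= 0 -> s = [::].
Proof.
case: s => // a s; rewrite chain_weight_cons => w_le0.
by exfalso; have := chain_weight_ge0 s; have := @halfpow_gt0 R a.1; lra.
Qed.

Lemma chain_split s (h : R) : 0 <= h -> h < chain_weight s ->
  exists s1 a s2, [/\ s = s1 ++ a :: s2, chain_weight s1 <= h
    & h < chain_weight s1 + halfpow a.1].
Proof.
elim: s h => [|a s IH] h h0; first by rewrite /chain_weight big_nil; lra.
rewrite chain_weight_cons => h_lt; have [ah | ha] := ltP h (halfpow a.1).
  by exists [::], a, s; rewrite /chain_weight big_nil add0r.
have [||s1 [b [s2 [-> h1 h2]]]] := IH (h - halfpow a.1); [lra | lra |].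
by exists (a :: s1), b, s2; rewrite chain_weight_cons; split => //; lra.
Qed.

(* Splitting a chain at half its weight leaves a middle link and two halves of
   weight at most 2^-(n+1); this is where U (n+1) + U (n+1) + U (n+1) <= U n enters. *)
Lemma chain_sum_in s n : chain_in s -> chain_weight s <= halfpow n -> U n (chain_sum s).
Proof.
have [k] := ubnP (size s); elim: k s n => // k IH s n.
case: (eqVneq s [::]) => [-> _ _ _ | s_neq0 s_size s_in s_weight].
  by rewrite /chain_sum big_nil.
have w_gt0 : 0 < chain_weight s.
  rewrite lt_def chain_weight_ge0 andbT; apply: contra s_neq0 => /eqP w0.
  by apply/eqP/chain_weight_le0; rewrite w0.
have [||s1 [a [s2 [s_def w1 w1a]]]] := chain_split s (chain_weight s / 2); [lra | lra |].
move: s_in s_weight s_size w_gt0 w1 w1a.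
rewrite s_def chain_in_cat chain_weight_cat chain_weight_cons chain_sum_cat size_cat /=.
move=> [s1_in as2_in] s_weight s_size w_gt0 w1 w1a.
have a_in : U a.1 a.2 by apply: as2_in; rewrite inE eqxx.
have s2_in : chain_in s2 by move=> b b_in; apply: as2_in; rewrite inE b_in orbT.
have w1_ge0 := chain_weight_ge0 s1; have w2_ge0 := chain_weight_ge0 s2.
rewrite /chain_sum big_cons /= -!/(chain_sum _).
have [n_lt_a | a_le_n] := ltnP n a.1.
  have hn := @halfpowS R n.
  rewrite addrA; apply: U_add3; first (apply: IH => //; [lia | lra]).
    exact: U_decr a_in.
  by apply: IH => //; [lia | lra].
have ha := @halfpow_le R n a.1; rewrite a_le_n in ha.
have -> : s1 = [::] by apply: chain_weight_le0; lra.
have -> : s2 = [::] by apply: chain_weight_le0; lra.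
rewrite /chain_sum !big_nil add0r addr0; apply: U_decr a_in.
by rewrite -(@halfpow_le R); lra.
Qed.

Definition chains_of (x : G) := [set s | chain_in s /\ chain_sum s = x].
Definition chain_value (x : G) : R := inf [set chain_weight s | s in chains_of x].

Lemma chains_of_neq0 x : [set chain_weight s | s in chains_of x] !=set0.
Proof.
exists (chain_weight [:: (0%N, x)]), [:: (0%N, x)] => //; split.
  by move=> a; rewrite inE => /eqP ->.
by rewrite /chain_sum big_seq1.
Qed.

Lemma chains_of_lbound x : lbound [set chain_weight s | s in chains_of x] 0.
Proof. by move=> _ [s _ <-]; exact: chain_weight_ge0. Qed.

Lemma chain_value_ge0 x : 0 <= chain_value x.
Proof. exact: lb_le_inf (chains_of_neq0 x) (chains_of_lbound x). Qed.

Lemma chain_value_le s : chain_in s -> chain_value (chain_sum s) <= chain_weight s.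
Proof.
by move=> s_in; apply: ge_inf; [exists 0; exact: chains_of_lbound | exists s].
Qed.

Lemma chain_value_lt x r : chain_value x < r ->
  exists2 s, chains_of x s & chain_weight s < r.
Proof. by move=> /(inf_lt (chains_of_neq0 x)) [_ [s x_s <-] lt_r]; exists s. Qed.

Lemma chain_value_le1 x : chain_value x <= 1.
Proof.
have := @chain_value_le [:: (0%N, x)]; rewrite /chain_sum /chain_weight !big_seq1.
by apply => a; rewrite inE => /eqP ->.
Qed.

Lemma chain_valueD x y : chain_value (x + y) <= chain_value x + chain_value y.
Proof.
have le_weights s t : chains_of x s -> chains_of y t ->
    chain_value (x + y) <= chain_weight s + chain_weight t.
  move=> [s_in <-] [t_in <-]; rewrite -chain_sum_cat -chain_weight_cat.
  exact/chain_value_le/chain_in_cat.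
suff: chain_value (x + y) - chain_value x <= chain_value y by lra.
apply: lb_le_inf (chains_of_neq0 y) _ => _ [t y_t <-].
suff: chain_value (x + y) - chain_weight t <= chain_value x by lra.
apply: lb_le_inf (chains_of_neq0 x) _ => _ [s x_s <-].
by have := le_weights s t x_s y_t; lra.
Qed.

Lemma chain_valueN x : chain_value (- x) = chain_value x.
Proof.
suff le_opp z : chain_value (- z) <= chain_value z.
  by apply/le_anti; rewrite le_opp /= -{1}[x]opprK le_opp.
apply: lb_le_inf (chains_of_neq0 z) _ => _ [s [s_in <-] <-].
pose t := [seq (a.1, - a.2) | a <- s].
have -> : - chain_sum s = chain_sum t by rewrite /chain_sum big_map sumrN.
have -> : chain_weight s = chain_weight t by rewrite /chain_weight big_map.
by apply: chain_value_le => b /mapP [a a_in ->] /=; apply: U_opp; exact: s_in.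
Qed.

Lemma chain_value_lt_halfpow n x : chain_value x < halfpow n -> U n x.
Proof.
by move=> /chain_value_lt [s [s_in <-] w_lt]; apply: chain_sum_in => //; exact: ltW.
Qed.

Lemma chain_value_le_halfpow n x : U n x -> chain_value x <= halfpow n.
Proof.
move=> Ux; have := @chain_value_le [:: (n, x)].
by rewrite /chain_sum /chain_weight !big_seq1; apply => a; rewrite inE => /eqP ->.
Qed.

Lemma chain_value0 : chain_value 0 = 0.
Proof.
apply/le_anti; rewrite chain_value_ge0 andbT.
by have := @chain_value_le [::]; rewrite /chain_sum /chain_weight !big_nil; apply.
Qed.

Lemma chain_value_is_value : (forall x, (forall n, U n x) -> x = 0) -> is_value chain_value.
Proof.
move=> U_sep; split.
- exact: chain_value_ge0.
- move=> x; split=> [x0 | ->]; last exact: chain_value0.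
  by apply: U_sep => n; apply: chain_value_lt_halfpow; rewrite x0 halfpow_gt0.
- exact: chain_valueN.
- exact: chain_valueD.
Qed.

End BirkhoffKakutani.

Section MetricNbhsBase.
Context {R : realType} {G : topologicalZmodType}.
Variable d : G -> G -> R.
Hypotheses (d_metric : is_metric d) (d_top : induces_topology d).

Fixpoint metric_nbhs0_seq (n : nat) : set G :=
  if n is m.+1 then
    nbhs0_shrink (metric_nbhs0_seq m `&` [set y | d 0 y < m.+1%:R^-1])
  else setT.

Lemma metric_nbhs0_seqP n :
  [/\ nbhs 0 (metric_nbhs0_seq n),
      forall x, metric_nbhs0_seq n x -> metric_nbhs0_seq n (- x),
      forall a b c, metric_nbhs0_seq n.+1 a -> metric_nbhs0_seq n.+1 b ->
        metric_nbhs0_seq n.+1 c -> metric_nbhs0_seq n (a + b + c)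
    & metric_nbhs0_seq n.+1 `<=` [set y | d 0 y < n.+1%:R^-1]].
Proof.
have ball0 m : nbhs 0 [set y | d 0 y < m.+1%:R^-1].
  by apply/(metric_nbhsP d_metric d_top); exists m.+1%:R^-1; split.
have seq0 m : nbhs 0 (metric_nbhs0_seq m).
  elim: m => [|m IH] /=; first exact: filterT.
  by case: (nbhs0_shrinkP _ (filterI IH (ball0 m))).
have [W0 _ W3] := nbhs0_shrinkP _ (filterI (seq0 n) (ball0 n)).
split => //.
- case: n {W0 W3} => [|n] //=.
  by case: (nbhs0_shrinkP _ (filterI (seq0 n) (ball0 n))).
- by move=> a b c Wa Wb Wc; case: (W3 _ _ _ Wa Wb Wc).
- move=> x Wx; have W0' := nbhs_singleton W0.
  by have [] := W3 _ _ _ Wx W0' W0'; rewrite !addr0.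
Qed.

End MetricNbhsBase.

Lemma natSinv_lt {R : realType} (e : R) : 0 < e -> exists n, n.+1%:R^-1 < e.
Proof. by move=> /ltr_add_invr [n]; rewrite add0r; exists n. Qed.

Lemma metrizable_value_base {R : realType} {G : topologicalZmodType} : metrizable R G ->
  exists q : G -> R, [/\ is_value q, forall x, q x <= 1 & zero_ball_base q].
Proof.
move=> [d [d_metric d_top]]; pose U := metric_nbhs0_seq d.
have U_props := metric_nbhs0_seqP d d_metric d_top.
have U0_full x : U 0%N x by [].
have [d0 dC dT] := d_metric.
have d_ge0 x y : 0 <= d x y.
  by have := dT x y x; rewrite (proj2 (d0 x x)) // dC; lra.
have U_nbhs n : nbhs 0 (U n) by case: (U_props n).
have U_0 n : U n 0 by exact: nbhs_singleton (U_nbhs n).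
have U_opp n : forall x, U n x -> U n (- x) by case: (U_props n).
have U_add3 n : forall a b c, U n.+1 a -> U n.+1 b -> U n.+1 c -> U n (a + b + c).
  by case: (U_props n).
have U_ball n : U n.+1 `<=` [set y | d 0 y < n.+1%:R^-1].
  by case: (U_props n).
exists (chain_value U); split.
- apply: (chain_value_is_value U U0_full U_0 U_opp U_add3) => x Ux.
  apply/esym/(proj1 (d0 0 x)).
  apply/le_anti; rewrite d_ge0 andbT leNgt; apply/negP => /natSinv_lt [n lt_d].
  by have /= /lt_trans /(_ lt_d) := U_ball n x (Ux n.+1); rewrite ltxx.
- exact: chain_value_le1 U U0_full.
- split=> [V /(metric_nbhsP d_metric d_top) [e [e0 eV]] | e /natSinv_lt [n lt_e]].
    have /natSinv_lt [n lt_e] := e0; exists (halfpow n.+1); first exact: halfpow_gt0.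
    move=> y /(chain_value_lt_halfpow U U0_full U_0 U_add3) /U_ball /= dy.
    by apply: eV; exact: lt_trans dy lt_e.
  apply: filterS (U_nbhs n) => y /(chain_value_le_halfpow (R := R)) value_le.
  exact: le_lt_trans value_le (le_lt_trans (halfpow_le_inv n) lt_e).
Qed.

Lemma max1_ge1 {R : realDomainType} (t : R) : 1 <= Num.max t 1.
Proof. by rewrite le_max lexx orbT. Qed.

Lemma max1_mul_le {R : realDomainType} (s t : R) : 0 <= s -> 0 <= t ->
  Num.max (s * t) 1 <= Num.max s 1 * Num.max t 1.
Proof.
move=> s0 t0; have s1 := max1_ge1 s; have t1 := max1_ge1 t.
have ss : s <= Num.max s 1 by rewrite le_max lexx.
have tt : t <= Num.max t 1 by rewrite le_max lexx.
by rewrite ge_max; apply/andP; split; nra.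
Qed.

Section PseudovectorAction.
Context {R : realType} {G : zmodType} {act : R -> G -> G}.
Hypothesis act_pv : pseudovector_action act.

Lemma act0 t : 0 <= t -> act t 0 = 0.
Proof.
case: act_pv => _ _ _ actD t0; apply: (@addrI _ (act t 0)).
by rewrite -actD // !addr0.
Qed.

Lemma actN t x : 0 <= t -> act t (- x) = - act t x.
Proof.
case: act_pv => _ _ _ actD t0; apply/eqP; rewrite -addr_eq0 -actD //.
by rewrite addNr act0.
Qed.

End PseudovectorAction.

Lemma nbhs0_act_segment {R : realType} {G : topologicalZmodType} {act : R -> G -> G}
    (V : set G) (T : R) : topological_pseudovector_action act -> nbhs 0 V ->
  nbhs 0 [set y | forall t, 0 <= t <= T -> V (act t y)].
Proof.
move=> [act_pv act_cont] V0.
have act_near t : `[0, T]%classic t -> \forall t' \near t & y \near (nbhs (0 : G)),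
    0 <= t' -> V (act t' y).
  rewrite set_itvcc /= => /andP [t0 _].
  have := proj1 (subspace_continuousP _ _) act_cont (t, 0) t0 V.
  by rewrite /from_subspace /= (act0 act_pv _ t0); apply.
have := @segment_compact R 0 T; rewrite compact_near_coveringP => /(_ G (nbhs 0)
  (fun y t => 0 <= t -> V (act t y)) (nbhs_filter 0) act_near).
by apply: filterS => y Vy t /andP [t0 tT]; apply: Vy => //; rewrite set_itvcc /= t0.
Qed.

Section Rescaling.
Context {R : realType} {G : zmodType}.
Variables (act : R -> G -> G) (q : G -> R).
Hypotheses (act_pv : pseudovector_action act) (q_value : is_value q)
  (q_le1 : forall x, q x <= 1).

Definition rescaled_value (x : G) : R :=
  sup [set q (act t x) / Num.max t 1 | t in [set t | 0 <= t]].

Lemma rescaled_value_ge x t : 0 <= t -> q (act t x) / Num.max t 1 <= rescaled_value x.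
Proof.
have [q_ge0 _ _ _] := q_value.
move=> t0; apply: ub_le_sup; last by exists t.
exists 1 => _ [s s0 <-]; have s1 := max1_ge1 s.
rewrite ler_pdivrMr; last lra.
by rewrite mul1r; exact: le_trans (q_le1 _) s1.
Qed.

Lemma rescaled_value_le x c :
  (forall t, 0 <= t -> q (act t x) / Num.max t 1 <= c) -> rescaled_value x <= c.
Proof.
move=> le_c; apply: ge_sup.
  by exists (q (act 0 x) / Num.max 0 1), 0; rewrite //= lexx.
by move=> _ [t t0 <-]; exact: le_c.
Qed.

Lemma value_le_rescaled x : q x <= rescaled_value x.
Proof.
have [_ act1 _ _] := act_pv.
by have := rescaled_value_ge x 1 ler01; rewrite act1 maxxx divr1.
Qed.

Lemma rescaled_valueN x : rescaled_value (- x) = rescaled_value x.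
Proof.
have [_ _ qN _] := q_value.
suff le_opp z : rescaled_value (- z) <= rescaled_value z.
  by apply/le_anti; rewrite le_opp /= -{1}[x]opprK le_opp.
apply: rescaled_value_le => t t0; rewrite (actN act_pv _ _ t0) qN.
exact: rescaled_value_ge.
Qed.

Lemma rescaled_valueD x y : rescaled_value (x + y) <= rescaled_value x + rescaled_value y.
Proof.
have [_ _ _ actD] := act_pv; have [_ _ _ qD] := q_value.
apply: rescaled_value_le => t t0; rewrite actD //.
have m1 := max1_ge1 t.
apply: (@le_trans _ _ ((q (act t x) + q (act t y)) / Num.max t 1)).
  by apply: ler_wpM2r; [rewrite invr_ge0; lra | exact: qD].
by rewrite mulrDl; apply: lerD; exact: rescaled_value_ge.
Qed.

Lemma rescaled_value_act s x : 0 <= s ->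
  rescaled_value (act s x) <= Num.max s 1 * rescaled_value x.
Proof.
have [_ _ actM _] := act_pv; have [q_ge0 _ _ _] := q_value.
move=> s0; apply: rescaled_value_le => t t0; rewrite -actM //.
have := rescaled_value_ge x _ (mulr_ge0 t0 s0); have := max1_mul_le _ _ t0 s0.
have := max1_ge1 t; have := max1_ge1 s; have := max1_ge1 (t * s).
have := q_ge0 (act (t * s) x).
move: (Num.max t 1) (Num.max s 1) (Num.max (t * s) 1) (q (act (t * s) x)).
move=> Mt Ms Mts a a0 Mts1 Ms1 Mt1 le_M le_p.
rewrite ler_pdivrMr; last lra.
rewrite ler_pdivrMr in le_p; last lra.
nra.
Qed.

Lemma rescaled_value_is_subnorm : is_subnorm act rescaled_value.
Proof.
have [q_ge0 q0 _ _] := q_value.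
split=> //; last exact: rescaled_value_act.
split=> [x | x | x | x y].
- exact: le_trans (q_ge0 x) (value_le_rescaled x).
- split=> [px0 | ->].
    by apply/q0/le_anti; rewrite q_ge0 andbT -px0 value_le_rescaled.
  apply/le_anti; rewrite (le_trans (q_ge0 0) (value_le_rescaled 0)) andbT.
  by apply: rescaled_value_le => t t0; rewrite (act0 act_pv _ t0) (proj2 (q0 0)) // mul0r.
- exact: rescaled_valueN.
- exact: rescaled_valueD.
Qed.

End Rescaling.

Lemma rescaled_value_ball_base {R : realType} {G : topologicalZmodType}
    (act : R -> G -> G) (q : G -> R) :
  topological_pseudovector_action act -> is_value q -> (forall x, q x <= 1) ->
  zero_ball_base q -> zero_ball_base (rescaled_value act q).
Proof.
move=> act_tpv q_value q_le1 [qV qe]; have [q_ge0 _ _ _] := q_value.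
have q_le_p := value_le_rescaled act q act_tpv.1 q_value q_le1.
split=> [V /qV [e e0 eV] | e e0].
  by exists e => // y p_lt; apply: eV; exact: le_lt_trans (q_le_p y) p_lt.
have e2_gt0 : 0 < e / 2 by lra.
apply: filterS (nbhs0_act_segment _ (2 / e) act_tpv (qe _ e2_gt0)) => y small /=.
suff : rescaled_value act q y <= e / 2 by lra.
apply: rescaled_value_le => t t0.
have m1 := max1_ge1 t.
have mt : t <= Num.max t 1 by rewrite le_max lexx.
have qa_ge0 := q_ge0 (act t y); rewrite ler_pdivrMr; last lra.
have [tT | Tt] := leP t (2 / e).
  by have /= := small t (introT andP (conj t0 tT)); nra.
have e2_inv : e / 2 * (2 / e) = 1 by field; lra.
by have := q_le1 (act t y); nra.
Qed.

Theorem proposition6p4 (R : realType) (G : topologicalZmodType)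
    (act : R -> G -> G) :
  topological_pseudovector_action act ->
  metrizable R G ->
  exists p : G -> R, is_subnorm act p /\ induces_topology (value_metric p).
Proof.
move=> act_tpv /metrizable_value_base [q [q_value q_le1 q_base]].
exists (rescaled_value act q); split.
  exact: rescaled_value_is_subnorm act_tpv.1 q_value q_le1.
exact/value_metric_induces/rescaled_value_ball_base.
Qed.
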